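(* Let $R$ be a power-serieswise Armendariz ring. Then the power series ring $R[[x]]$ is a generalized right Baer ring if and only if $R$ is a generalized right Baer ring.
   Context: All rings are associative with identity. For a nonempty subset $X$ of a ring $R$, $r_R(X)=\{a\in R : xa=0 \text{ for all } x\in X\}$, and for a positive integer $n$, $X^n$ denotes the set of all products $a_1\cdots a_n$ with $a_i\in X$. A ring $R$ is generalized right Baer if for every nonempty subset $X$ of $R$ there exist a positive integer $n$ (depending on $X$) and an idempotent $e\in R$ with $r_R(X^n)=eR$. A ring $R$ is power-serieswise Armendariz if whenever $f(x)=\sum_{i\ge0}a_ix^i$ and $g(x)=\sum_{j\ge0}b_jx^j$ in $R[[x]]$ satisfy $f(x)g(x)=0$, then $a_ib_j=0$ for all $i,j$. *)

From HB Require Import structures.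
From mathcomp Require Import all_boot all_order all_algebra.
Set Implicit Arguments. Unset Strict Implicit. Unset Printing Implicit Defensive.
Import GRing.Theory.
Local Open Scope ring_scope.

(* Generic notions for a ring given by its carrier, multiplication and zero.
   (Used both for R and for the power series ring R[[x]].) *)
Section Generic.
Variables (T : Type) (mul : T -> T -> T) (zero : T).

(* X^n for n = k.+1: products a_1 * ... * a_{k+1} with every a_i in X *)
Fixpoint setpow (X : T -> Prop) (k : nat) : T -> Prop :=
  match k with
  | 0 => X
  | k'.+1 => fun a => exists b c, X b /\ setpow X k' c /\ a = mul b c
  end.

Definition r_ann (X : T -> Prop) : T -> Prop :=
  fun a => forall x, X x -> mul x a = zero.

Definition gen_right_Baer : Prop :=
  forall X : T -> Prop, (exists x, X x) ->
    exists (k : nat) (e : T), mul e e = e /\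
      (forall a, r_ann (setpow X k) a <-> exists b, a = mul e b).
End Generic.

Definition pseries (R : nzRingType) := nat -> R.

Definition ps_mul (R : nzRingType) (f g : pseries R) : pseries R :=
  fun n => \sum_(i < n.+1) f i * g (n - i)%N.

Definition ps_zero (R : nzRingType) : pseries R := fun _ => 0.

Definition power_serieswise_Armendariz (R : nzRingType) : Prop :=
  forall f g : pseries R, ps_mul f g = ps_zero R ->
    forall i j : nat, f i * g j = 0.

From mathcomp Require Import all_boot all_order all_algebra.
From Stdlib Require Import FunctionalExtensionality Setoid.
Set Implicit Arguments. Unset Strict Implicit.
Import GRing.Theory.
Local Open Scope ring_scope.

(* For a power-serieswise Armendariz ring, a series g right-annihilates X^n
   in R[[x]] exactly when every coefficient of g right-annihilates Y^n in R,
   where Y is the set of coefficients of the members of X.  Hence, if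
   r(Y^n) = eR, then r(X^n) = eR[[x]]; conversely, if r(X^n) = E R[[x]]
   for the set X of constant series with coefficients in Y, then
   r(Y^n) = E_0 R. *)

Lemma idempotent_mul_imageP (T : Type) (mul : T -> T -> T) (e : T) :
  associative mul -> mul e e = e ->
  forall a, (exists b, a = mul e b) <-> a = mul e a.
Proof.
move=> mulA ee a; split=> [[b ->]|ha]; last by exists a.
by rewrite mulA ee.
Qed.

Section PowerSeries.
Variable R : nzRingType.
Implicit Types f g h : pseries R.

Definition trunc (n : nat) f : {poly R} := \poly_(i < n.+1) f i.

Lemma coef_ps_mul_trunc n m f g : (m <= n)%N ->
  ps_mul f g m = (trunc n f * trunc n g)`_m.
Proof.
move=> hm; rewrite coefM /ps_mul; apply: eq_bigr => i _.
rewrite !coef_poly; have hi := ltn_ord i.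
rewrite ifT; last by apply: leq_ltn_trans (leq_trans _ hm) _; rewrite // -ltnS.
by rewrite ifT // ltnS (leq_trans (leq_subr _ _) hm).
Qed.

(* The n-th coefficient of a product only depends on the truncations at n,
   so associativity is inherited from {poly R}. *)
Lemma ps_mulA : associative (@ps_mul R).
Proof.
move=> f g h; apply: functional_extensionality_dep => n.
have -> : ps_mul f (ps_mul g h) n = (trunc n f * (trunc n g * trunc n h))`_n.
  rewrite coefM /ps_mul; apply: eq_bigr => i _.
  by rewrite coef_poly ifT // -(coef_ps_mul_trunc g h (leq_subr i n)).
have -> : ps_mul (ps_mul f g) h n = ((trunc n f * trunc n g) * trunc n h)`_n.
  rewrite coefM /ps_mul; apply: eq_bigr => i _.
  rewrite [X in _ = _ * X]coef_poly ifT; last by rewrite ltnS leq_subr.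
  by rewrite -(coef_ps_mul_trunc f g (ltnSE (ltn_ord i))).
by rewrite mulrA.
Qed.

Lemma coef0_ps_mul f g : ps_mul f g 0%N = f 0%N * g 0%N.
Proof. by rewrite /ps_mul big_ord1. Qed.

Definition scale (c : R) f : pseries R := fun n => c * f n.
Definition cst (a : R) : pseries R := fun n => if n == 0%N then a else 0.

Lemma scale_ps_mul c f g : scale c (ps_mul f g) = ps_mul (scale c f) g.
Proof.
apply: functional_extensionality_dep => n; rewrite /scale /ps_mul mulr_sumr.
by apply: eq_bigr => i _; rewrite mulrA.
Qed.

Lemma scale1 f : scale 1 f = f.
Proof. by apply: functional_extensionality_dep => n; rewrite /scale mul1r. Qed.

Lemma ps_mul_cst a g : ps_mul (cst a) g = scale a g.
Proof.
apply: functional_extensionality_dep => n.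
rewrite /ps_mul big_ord_recl /= subn0 big1 ?addr0 // => i _.
by rewrite /cst /= mul0r.
Qed.

Lemma cst_mul a b : ps_mul (cst a) (cst b) = cst (a * b).
Proof.
rewrite ps_mul_cst; apply: functional_extensionality_dep => n.
by rewrite /scale /cst; case: (n == 0%N); rewrite ?mulr0.
Qed.

Hypothesis PSA : power_serieswise_Armendariz R.

Section CoefficientAnnihilators.
Variables (X : pseries R -> Prop) (Y : R -> Prop).
Hypothesis X_coef : forall f, X f -> forall i, Y (f i) \/ f i = 0.
Hypothesis Y_coef : forall y, Y y -> exists f i, X f /\ f i = y.

(* The left factor c is what lets the induction peel off one factor of X^n
   (resp. Y^n) at a time. *)
Lemma ps_ann_setpow_of_coef k c g :
  (forall z, setpow (@GRing.mul R) Y k z -> forall j, c * z * g j = 0) ->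
  forall Q, setpow (@ps_mul R) X k Q -> scale c (ps_mul Q g) = ps_zero R.
Proof.
elim: k c => [|k IH] c H Q /=.
  move=> XQ; rewrite scale_ps_mul; apply: functional_extensionality_dep => n.
  rewrite /ps_mul big1 // => i _; rewrite /scale.
  by case: (X_coef XQ i) => [Yq|->]; [apply: H|rewrite mulr0 mul0r].
move=> [f [Q' [Xf [XQ' ->]]]].
rewrite -ps_mulA scale_ps_mul; apply: functional_extensionality_dep => n.
rewrite /ps_mul big1 // => i _.
suff /(congr1 (fun s => s (n - i)%N)) : scale (c * f i) (ps_mul Q' g) = ps_zero R.
  by rewrite /scale.
apply: IH XQ' => z Yz j; case: (X_coef Xf i) => [Yf|->]; last first.
  by rewrite mulr0 !mul0r.
by rewrite -[c * f i * z]mulrA; apply: H; exists (f i), z.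
Qed.

Lemma coef_ann_setpow_of_ps k c g :
  (forall Q, setpow (@ps_mul R) X k Q -> scale c (ps_mul Q g) = ps_zero R) ->
  forall z, setpow (@GRing.mul R) Y k z -> forall j, c * z * g j = 0.
Proof.
elim: k c => [|k IH] c H z /=.
  move=> /Y_coef [f [i [Xf <-]]] j.
  by have := H f Xf; rewrite scale_ps_mul => /PSA /(_ i j).
move=> [y [z' [/Y_coef [f [i [Xf <-]]] [Yz' ->]]]] j; rewrite mulrA.
apply: IH Yz' j => Q' XQ'.
have /PSA Hfi : ps_mul (scale c f) (ps_mul Q' g) = ps_zero R.
  by rewrite -scale_ps_mul ps_mulA; apply: H; exists f, Q'.
by apply: functional_extensionality_dep => m; exact: Hfi.
Qed.

Lemma ps_r_ann_setpowP k g :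
  r_ann (@ps_mul R) (ps_zero R) (setpow (@ps_mul R) X k) g <->
  forall j, r_ann (@GRing.mul R) 0 (setpow (@GRing.mul R) Y k) (g j).
Proof.
split=> [hg j z Yz | hg Q XQ].
  rewrite -[z]mul1r; apply: coef_ann_setpow_of_ps Yz j => Q XQ.
  by rewrite scale1 hg.
rewrite -[ps_mul Q g]scale1; apply: ps_ann_setpow_of_coef XQ => z Yz j.
by rewrite mul1r hg.
Qed.

End CoefficientAnnihilators.

Definition coefs (X : pseries R -> Prop) : R -> Prop :=
  fun y => exists f i, X f /\ f i = y.

Definition csts (Y : R -> Prop) : pseries R -> Prop :=
  fun f => exists y, Y y /\ f = cst y.

Lemma gen_right_Baer_ps :
  gen_right_Baer (@GRing.mul R) 0 -> gen_right_Baer (@ps_mul R) (ps_zero R).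
Proof.
move=> HB X [f0 Xf0].
have X_coef f : X f -> forall i, coefs X (f i) \/ f i = 0.
  by move=> Xf i; left; exists f, i.
have [|k [e [ee he]]] := HB (coefs X); first by exists (f0 0%N), f0, 0%N.
have cst_ee : ps_mul (cst e) (cst e) = cst e by rewrite cst_mul ee.
exists k, (cst e); split=> // g.
rewrite (idempotent_mul_imageP ps_mulA cst_ee g).
rewrite (ps_r_ann_setpowP X_coef (fun y Yy => Yy)) ps_mul_cst.
split=> [hg | -> j]; last by apply/he; exists (g j).
apply: functional_extensionality_dep => j.
exact/(idempotent_mul_imageP (@mulrA R) ee)/he.
Qed.

Lemma gen_right_Baer_of_ps :
  gen_right_Baer (@ps_mul R) (ps_zero R) -> gen_right_Baer (@GRing.mul R) 0.
Proof.
move=> HB Y [y0 Yy0].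
have X_coef f : csts Y f -> forall i, Y (f i) \/ f i = 0.
  by move=> [y [Yy ->]] i; rewrite /cst; case: (i == 0%N); [left|right].
have Y_coef y : Y y -> exists f i, csts Y f /\ f i = y.
  by move=> Yy; exists (cst y), 0%N; split => //; exists y.
have [|k [E [EE hE]]] := HB (csts Y); first by exists (cst y0), y0.
have annE j : r_ann (@GRing.mul R) 0 (setpow (@GRing.mul R) Y k) (E j).
  by move: j; apply/(ps_r_ann_setpowP X_coef Y_coef); apply/hE; exists E.
have E0E0 : E 0%N * E 0%N = E 0%N by rewrite -[in RHS]EE coef0_ps_mul.
exists k, (E 0%N); split=> // a.
rewrite (idempotent_mul_imageP (@mulrA R) E0E0 a).
split=> [ha | ha z Yz]; last by rewrite ha mulrA annE ?mul0r.
have /hE /(idempotent_mul_imageP ps_mulA EE) :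
    r_ann (@ps_mul R) (ps_zero R) (setpow (@ps_mul R) (csts Y) k) (cst a).
  apply/(ps_r_ann_setpowP X_coef Y_coef) => j z Yz.
  by rewrite /cst; case: (j == 0%N); rewrite ?ha ?mulr0.
by move/(congr1 (fun s => s 0%N)); rewrite coef0_ps_mul.
Qed.

End PowerSeries.

Theorem corollary3p10 (R : nzRingType) :
  power_serieswise_Armendariz R ->
  (gen_right_Baer (@ps_mul R) (ps_zero R) <-> gen_right_Baer (@GRing.mul R) 0%R).
Proof.
move=> PSA; split; [exact: gen_right_Baer_of_ps | exact: gen_right_Baer_ps].
Qed.
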